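(* If $f \in R$ satisfies $v(f) > a_n$, then $f \in \mathfrak m^2$.
   Context: Let $k$ be a field and let $(R,\mathfrak m)$ be a complete local noetherian domain of dimension $1$ containing $k$ with $R/\mathfrak m = k$, with normalization $\overline R$ having residue field $k$, so $\overline R = k[[t]]$ and $R \subseteq k[[t]]$ is finite birational. Let $v$ be the $t$-adic valuation, $v(0)=\infty$. For $A \subseteq k((t))$ let $v(A) = \{v(f): f\in A\setminus\{0\}\}$. The Herzog–Kunz sequence of $R$ is $v(\mathfrak m)\setminus v(\mathfrak m^2)$ listed increasingly as $a_1 < \cdots < a_n$. *)

From Stdlib Require List.
From mathcomp Require Import all_boot all_algebra.
Set Implicit Arguments. Unset Strict Implicit. Unset Printing Implicit Defensive.
Import GRing.Theory.
Local Open Scope ring_scope.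

Definition pseries (k : fieldType) := nat -> k.

Definition ps_const (k : fieldType) (c : k) : pseries k :=
  fun n => if n == 0%N then c else 0.
Definition ps_add (k : fieldType) (f g : pseries k) : pseries k := fun n => f n + g n.
Definition ps_opp (k : fieldType) (f : pseries k) : pseries k := fun n => - f n.
Definition ps_mul (k : fieldType) (f g : pseries k) : pseries k :=
  fun n => \sum_(i < n.+1) f i * g (n - i)%N.
Definition ps_zero (k : fieldType) : pseries k := fun _ => 0.

(* t-adic valuation: is_val f n  <->  f <> 0 and v(f) = n *)
Definition is_val (k : fieldType) (f : pseries k) (n : nat) : Prop :=
  f n != 0 /\ forall i, (i < n)%N -> f i = 0.

(* R is a k-subalgebra of k[[t]] with nonzero conductor (t^c k[[t]] ⊆ R):
   exactly the complete local 1-dim domains containing k with residue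
   field k whose normalization is k[[t]] (finite, birational). *)
Record analytic_branch (k : fieldType) (R : pseries k -> Prop) : Prop := {
  ab_const : forall c : k, R (ps_const c);
  ab_add : forall f g, R f -> R g -> R (ps_add f g);
  ab_opp : forall f, R f -> R (ps_opp f);
  ab_mul : forall f g, R f -> R g -> R (ps_mul f g);
  ab_conductor : exists c : nat, forall f : pseries k,
      (forall i, (i < c)%N -> f i = 0) -> R f
}.

Definition max_ideal (k : fieldType) (R : pseries k -> Prop) (f : pseries k) : Prop :=
  R f /\ f 0%N = 0.

Definition max_ideal_sq (k : fieldType) (R : pseries k -> Prop) (f : pseries k) : Prop :=
  exists s : seq (pseries k * pseries k),
    (forall p, List.In p s -> max_ideal R p.1 /\ max_ideal R p.2) /\
    f = foldr (fun p acc => ps_add (ps_mul p.1 p.2) acc) (@ps_zero k) s.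

Definition in_vals (k : fieldType) (A : pseries k -> Prop) (n : nat) : Prop :=
  exists f, A f /\ is_val f n.

Definition herzog_kunz (k : fieldType) (R : pseries k -> Prop) (a : nat) : Prop :=
  in_vals (max_ideal R) a /\ ~ in_vals (max_ideal_sq R) a.

(* Let c > 0 be such that t^c k[[t]] lies in R.  An element of m vanishing to
   order 2c factors as t^c * (f / t^c), a product of two elements of m.  Below
   that, argue by downward induction on the order j of f: if v(f) = j, then
   j > 0 and j is not a Herzog-Kunz term, so j = v(g) for some g in m^2, and
   f - (f_j / g_j) g lies in R and vanishes to order j + 1. *)
From mathcomp Require Import all_boot all_algebra zify.
From Stdlib Require Import Classical FunctionalExtensionality.
From Stdlib Require Wf_nat.
Set Implicit Arguments.
Unset Strict Implicit.
Local Open Scope ring_scope.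
Import GRing.Theory.

Section PowerSeries.
Variable k : fieldType.
Implicit Types f g : pseries k.

Definition vanish_below (n : nat) f := forall i, (i < n)%N -> f i = 0.

Definition ps_scale (c : k) f : pseries k := fun n => c * f n.

Definition ps_monomial (n : nat) : pseries k := fun i => if i == n then 1 else 0.

Definition ps_shift (n : nat) f : pseries k := fun i => f (i + n)%N.

Definition sum_products (s : seq (pseries k * pseries k)) : pseries k :=
  foldr (fun p acc => ps_add (ps_mul p.1 p.2) acc) (@ps_zero k) s.

Lemma vanish_below_monomial n : vanish_below n (ps_monomial n).
Proof. by move=> i hi; rewrite /ps_monomial; case: eqP => //; lia. Qed.

Lemma ps_zeroE : @ps_zero k = ps_const 0.
Proof. by apply: functional_extensionality => -[]. Qed.

Lemma vanish_below_mul a b f g :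
  vanish_below a f -> vanish_below b g -> vanish_below (a + b) (ps_mul f g).
Proof.
move=> hf hg n hn; rewrite /ps_mul big1 // => i _.
case: (ltnP i a) => hi; first by rewrite hf // mul0r.
rewrite hg ?mulr0 //; have := ltn_ord i; lia.
Qed.

Lemma ps_mul_constl c f : ps_mul (ps_const c) f = ps_scale c f.
Proof.
apply: functional_extensionality => n; rewrite /ps_mul big_ord_recl /= subn0.
by rewrite big1 ?addr0 // => i _; rewrite mul0r.
Qed.

Lemma ps_mul_monomial_shift n f :
  vanish_below n f -> ps_mul (ps_monomial n) (ps_shift n f) = f.
Proof.
move=> hf; apply: functional_extensionality => i; rewrite /ps_mul.
case: (ltnP i n) => hi.
  rewrite hf // big1 // => j _; rewrite /ps_monomial.
  by case: eqP => [e|_]; [have := ltn_ord j; lia | rewrite mul0r].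
have hn : (n < i.+1)%N by lia.
rewrite (bigD1 (Ordinal hn)) //= big1 ?addr0 => [|j hj].
  by rewrite /ps_monomial /ps_shift eqxx mul1r subnK.
rewrite /ps_monomial; case: eqP => [e|_]; last by rewrite mul0r.
by move: hj; rewrite (_ : j = Ordinal hn) ?eqxx //; apply: val_inj.
Qed.

Lemma sum_products_cat s t :
  sum_products (s ++ t) = ps_add (sum_products s) (sum_products t).
Proof.
elim: s => [|p s IH] /=; apply: functional_extensionality => n.
  by rewrite /ps_add /ps_zero add0r.
by rewrite IH /ps_add addrA.
Qed.

Lemma sum_products_scale c s :
  sum_products [seq (ps_mul (ps_const c) p.1, p.2) | p <- s] =
  ps_scale c (sum_products s).
Proof.
elim: s => [|p s IH] /=; apply: functional_extensionality => n.
  by rewrite /ps_scale /ps_zero mulr0.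
rewrite IH ps_mul_constl /ps_scale /ps_add /ps_mul mulrDr mulr_sumr.
by congr (_ + _); apply: eq_bigr => i _; rewrite mulrA.
Qed.

End PowerSeries.

Section Branch.
Variables (k : fieldType) (R : pseries k -> Prop).
Implicit Types f g : pseries k.

Lemma max_ideal_sq_vanish_below a f :
  (forall g, max_ideal R g -> vanish_below a g) ->
  max_ideal_sq R f -> vanish_below (a + a) f.
Proof.
move=> hm [s [hs ->]]; elim: s hs => [|p s IH] hs i hi //=.
have [h1 h2] := hs p (or_introl erefl).
rewrite /ps_add (vanish_below_mul (hm _ h1) (hm _ h2)) // IH ?addr0 // => q hq.
exact: hs (or_intror hq).
Qed.

Hypothesis hR : analytic_branch R.

Lemma max_ideal_sq_sub f : max_ideal_sq R f -> R f.
Proof.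
case=> s [hs ->]; elim: s hs => [|p s IH] hs /=.
  by rewrite ps_zeroE; apply: ab_const.
have [[h1 _] [h2 _]] := hs p (or_introl erefl).
apply: (ab_add hR (ab_mul hR h1 h2)); apply: IH => q hq.
exact: hs (or_intror hq).
Qed.

Lemma max_ideal_sq_add f g :
  max_ideal_sq R f -> max_ideal_sq R g -> max_ideal_sq R (ps_add f g).
Proof.
case=> s [hs ->] [t [ht ->]].
exists (s ++ t); split; last exact: esym (sum_products_cat s t).
by move=> p hp; case: (List.in_app_or _ _ _ hp) => ?; [apply: hs | apply: ht].
Qed.

Lemma max_ideal_sq_scale c f : max_ideal_sq R f -> max_ideal_sq R (ps_scale c f).
Proof.
case=> s [hs ->].
exists [seq (ps_mul (ps_const c) p.1, p.2) | p <- s].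
split; last exact: esym (sum_products_scale c s).
move=> p /List.in_map_iff [q [<- hq]] /=; have [[h1 h10] h2] := hs q hq.
split=> //; split; first exact: (ab_mul hR (ab_const hR c) h1).
by rewrite ps_mul_constl /ps_scale h10 mulr0.
Qed.

Lemma conductor_pos : exists c, (0 < c)%N /\ forall f, vanish_below c f -> R f.
Proof.
have [c hc] := ab_conductor hR; exists c.+1; split => // f hf.
by apply: hc => i hi; apply: hf; lia.
Qed.

Lemma max_ideal_vanish_below c f :
  (0 < c)%N -> (forall g, vanish_below c g -> R g) ->
  vanish_below c f -> max_ideal R f.
Proof. by move=> c0 hc hf; split; [apply: hc | apply: hf]. Qed.

Lemma max_ideal_sq_vanish_conductor c f :
  (0 < c)%N -> (forall g, vanish_below c g -> R g) ->
  vanish_below (c + c) f -> max_ideal_sq R f.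
Proof.
move=> c0 hc hf; exists [:: (ps_monomial k c, ps_shift c f)].
split; last first.
  rewrite /= ps_mul_monomial_shift => [|i hi]; last by apply: hf; lia.
  by apply: functional_extensionality => n; rewrite /ps_add /ps_zero addr0.
move=> p [<- | []] /=; split; apply: (max_ideal_vanish_below c0 hc).
  exact: vanish_below_monomial.
by move=> i hi; rewrite /ps_shift hf //; lia.
Qed.

(* The least index at which some element of m is nonzero lies in v(m), while
   every element of m^2 vanishes to twice that order. *)
Lemma herzog_kunz_exists : exists a, herzog_kunz R a.
Proof.
have [c [c0 hc]] := conductor_pos.
pose P n := exists h, max_ideal R h /\ h n != 0.
have hPc : P c.
  exists (ps_monomial k c); split; last by rewrite /ps_monomial eqxx oner_neq0.
  exact: (max_ideal_vanish_below c0 hc (@vanish_below_monomial k c)).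
have [n [[[h [hm hn]] hmin] _]] :=
  Wf_nat.dec_inh_nat_subset_has_unique_least_element P
    (fun n => classic (P n)) (ex_intro _ c hPc).
have hvan g : max_ideal R g -> vanish_below n g.
  move=> hg i hi; apply/eqP/negP => /negP hgi.
  by have /leP := hmin i (ex_intro _ g (conj hg hgi)); lia.
have n0 : (0 < n)%N by case: n {hmin hvan} hn => //; rewrite hm.2 eqxx.
exists n; split; first by exists h; split => //; split => //; apply: hvan.
case=> g [/(max_ideal_sq_vanish_below hvan) hg [+ _]].
by rewrite hg ?eqxx //; lia.
Qed.

Lemma max_ideal_sq_of_vanish_below j f :
  R f -> vanish_below j f -> (forall a, herzog_kunz R a -> (a < j)%N) ->
  max_ideal_sq R f.
Proof.
have [c [c0 hc]] := conductor_pos.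
elim: (c + c - j)%N {-2}j (leqnn (c + c - j)) f => [|m IH] {}j hj f hf hv hhk.
  by apply: (max_ideal_sq_vanish_conductor c0 hc) => i hi; apply: hv; lia.
have hhk_succ a : herzog_kunz R a -> (a < j.+1)%N by move/hhk; lia.
have [fj0 | fj0] := eqVneq (f j) 0.
  apply: (IH j.+1) => //; first lia.
  by move=> i hi; case: (ltngtP i j) => [/hv | | ->] //; lia.
have j0 : (0 < j)%N by have [a /hhk] := herzog_kunz_exists; lia.
have hfm : max_ideal R f by split => //; apply: hv.
have [g [hg [gj0 hgv]]] : in_vals (max_ideal_sq R) j.
  apply: NNPP => hj2; suff /hhk : herzog_kunz R j by rewrite ltnn.
  by split=> //; exists f.
pose d := ps_add f (ps_opp (ps_mul (ps_const (f j / g j)) g)).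
have -> : f = ps_add d (ps_scale (f j / g j) g).
  apply: functional_extensionality => n.
  by rewrite /d ps_mul_constl /ps_add /ps_opp /ps_scale subrK.
apply: max_ideal_sq_add; last exact: max_ideal_sq_scale.
apply: (IH j.+1) => //; first lia.
  apply: (ab_add hR hf); apply/(ab_opp hR)/(ab_mul hR (ab_const hR _)).
  exact: max_ideal_sq_sub.
move=> i hi; rewrite /d ps_mul_constl /ps_add /ps_opp /ps_scale.
case: (ltngtP i j) => [hij | | ->]; [ | lia | ].
  by rewrite (hv i) // (hgv i) // mulr0 subr0.
by rewrite divfK // subrr.
Qed.

End Branch.

Theorem mainTheorem6 (k : fieldType) (R : pseries k -> Prop)
  (hR : analytic_branch R) (f : pseries k) (hf : R f)
  (hv : f = @ps_zero k \/
        exists n, is_val f n /\ forall a, herzog_kunz R a -> (a < n)%N) :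
  max_ideal_sq R f.
Proof.
case: hv => [-> | [n [[_ hn] hhk]]]; first by exists [::].
exact: (max_ideal_sq_of_vanish_below hR hf hn hhk).
Qed.
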